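(* Let $R_1,R_2,S_1,S_2\in\mathfrak{P}$. If $R_1\sqsubseteq_\Gamma S_1$ and $R_2\sqsubseteq_\Gamma S_2$ with respect to $\mathfrak{P}$, then $R_1\oplus R_2\sqsubseteq_\Gamma S_1\oplus S_2$ with respect to $\mathfrak{P}$. Here $\oplus$ denotes the ordinal sum of posets, in which every element of the first summand is placed below every element of the second.
   Context: **Digraphs and homomorphisms.** - A digraph $G$ is a pair $(V(G),A(G))$, where $V(G)$ is a finite non-empty set and $A(G)\subseteq V(G)\times V(G)$. Arcs are written $vw$. - $\mathfrak{P}$ is the class of finite posets, i.e. reflexive, antisymmetric, transitive digraphs. - A homomorphism $\xi:G\to H$ is a map $V(G)\to V(H)$ with $\xi(v)\xi(w)\in A(H)$ for all $vw\in A(G)$. $\mathcal{H}(G,H)$ is the set of homomorphisms. **Connectivity.** - Two vertices $u,w$ are adjacent if $uw\in A(G)$ or $wu\in A(G)$. - For $X\subseteq V(G)$ and $v,w\in X$, the vertices $v$ and $w$ are connected in $X$ if $v=w$, or if there are $z_0=v,\dots,z_I=w$ in $X$ with consecutive terms adjacent. - $\gamma_X(v)$ is the set of such $w$. - $\Gamma_\xi(v)=\gamma_{\xi^{-1}(\xi(v))}(v)$. **Schemes.** - $\mathfrak{P}_r$ is a fixed system of representatives of $\mathfrak{P}$ up to isomorphism. - $R\sqsubseteq_\Gamma S$ with respect to $\mathfrak{P}$ means there exist injective maps $\rho_G:\mathcal{H}(G,R)\to\mathcal{H}(G,S)$, $G\in\mathfrak{P}_r$, with $\Gamma_{\rho_G(\xi)}(v)=\Gamma_\xi(v)$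 for all $G\in\mathfrak{P}_r$, $\xi\in\mathcal{H}(G,R)$ and $v\in V(G)$. *)

From mathcomp Require Import all_boot.
Set Implicit Arguments. Unset Strict Implicit. Unset Printing Implicit Defensive.

Record digraph := Digraph { vert : finType; arc : rel vert }.
Arguments arc : clear implicits.

Definition is_poset (G : digraph) : Prop :=
  [/\ 0 < #|{: vert G}|, reflexive (arc G), antisymmetric (arc G) & transitive (arc G)].

Definition is_hom (G H : digraph) (xi : vert G -> vert H) : Prop :=
  forall v w, arc G v w -> arc H (xi v) (xi w).

Definition adjacent (G : digraph) (u w : vert G) : bool := arc G u w || arc G w u.

Definition gamma (G : digraph) (X : {set vert G}) (v : vert G) : {set vert G} :=
  [set w | (v \in X) &&
     connect [rel a b | [&& a \in X, b \in X & adjacent a b]] v w].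

Definition Gamma (G H : digraph) (xi : vert G -> vert H) (v : vert G) : {set vert G} :=
  gamma [set u | xi u == xi v] v.

Arguments is_hom : clear implicits.

(* R [=_Gamma S with respect to the class of finite posets.  The family of
   injections rho_G indexed by a system of representatives is rendered as: for
   every finite poset G there is such an injection. *)
Definition sqsubGamma (R S : digraph) : Prop :=
  forall G : digraph, is_poset G ->
  exists rho : (vert G -> vert R) -> (vert G -> vert S),
    [/\ forall xi, is_hom G R xi -> is_hom G S (rho xi),
        forall xi1 xi2, is_hom G R xi1 -> is_hom G R xi2 ->
          rho xi1 =1 rho xi2 -> xi1 =1 xi2
      & forall xi, is_hom G R xi -> forall v, Gamma (rho xi) v = Gamma xi v].

Definition ordsum_arc (R1 R2 : digraph) (x y : (vert R1 + vert R2)%type) : bool :=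
  match x, y with
  | inl a, inl b => arc R1 a b
  | inr a, inr b => arc R2 a b
  | inl _, inr _ => true
  | inr _, inl _ => false
  end.

Definition ordsum (R1 R2 : digraph) : digraph :=
  @Digraph (vert R1 + vert R2)%type (ordsum_arc (R1:=R1) (R2:=R2)).

From Pilot Require Import Defs.
From mathcomp Require Import all_boot.
From Stdlib Require Import ClassicalEpsilon.
(* Import Defs again after all_boot, so that [arc] is the digraph arc relation
   rather than the cycle-arc function of [path]. *)
Import Defs.
Set Implicit Arguments. Unset Strict Implicit. Unset Printing Implicit Defensive.

(* Let xi : G -> R1 (+) R2 be a homomorphism from a finite poset G, and let A
   be the set of vertices that xi sends into the lower summand R1.  Then xi
   restricts to homomorphisms xi1 : G[A] -> R1 and xi2 : G[~A] -> R2 on the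
   induced subposets, and we define rho(xi) by gluing rho1(xi1) on A with
   rho2(xi2) on ~A.  Arcs from A to ~A are respected because in an ordinal sum
   everything of the first summand lies below the second, and no arc goes from
   ~A back to A since xi is a homomorphism.  Since A is recovered from rho(xi),
   injectivity follows from that of rho1 and rho2.  Finally, the fibres of
   rho(xi) and of xi never meet both A and ~A, so their connected components
   can be computed inside G[A] or G[~A], where rho1 and rho2 preserve them. *)

Definition induced (G : digraph) (A : {set vert G}) : digraph :=
  @Digraph {v : vert G | v \in A} (fun x y => arc G (val x) (val y)).

Variant induced_split_spec (G : digraph) (A : {set vert G}) (v : vert G) : bool -> Type :=
  | InducedIn (x : vert (induced A)) of v = val x : induced_split_spec A v true
  | InducedOut (y : vert (induced (~: A))) of v = val y : induced_split_spec A v false.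

Lemma induced_splitP (G : digraph) (A : {set vert G}) (v : vert G) :
  induced_split_spec A v (v \in A).
Proof.
case: (boolP (v \in A)) => vA.
  by apply: (@InducedIn _ _ _ (Sub v vA)); rewrite SubK.
have vCA : v \in ~: A by rewrite inE.
by apply: (@InducedOut _ _ _ (Sub v vCA)); rewrite SubK.
Qed.

Lemma induced_poset (G : digraph) (A : {set vert G}) (v : vert G) :
  is_poset G -> v \in A -> is_poset (induced A).
Proof.
case=> _ refl_G anti_G trans_G vA; split.
- by apply/card_gt0P; exists (Sub v vA).
- by move=> x; apply: refl_G.
- by move=> x y xy; apply: val_inj; apply: anti_G.
- by move=> x y z; apply: trans_G.
Qed.

Lemma gamma_subset (G : digraph) (X : {set vert G}) (v : vert G) :
  gamma X v \subset X.
Proof.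
apply/subsetP => w; rewrite inE => /andP[vX /connectP[p p_path ->]].
by elim: p v vX p_path => //= u p IHp v _ /andP[/and3P[_ uX _]]; apply: IHp.
Qed.

Lemma homo_connect (T T' : finType) (e : rel T) (e' : rel T') (f : T -> T') :
  {homo f : a b / e a b >-> e' a b} -> {homo f : a b / connect e a b >-> connect e' a b}.
Proof.
move=> f_homo a b /connectP[p p_path ->]; apply/connectP.
by exists (map f p); [exact: homo_path f_homo p_path | rewrite last_map].
Qed.

Lemma gamma_induced_val (G : digraph) (A X : {set vert G}) (x y : vert (induced A)) :
  X \subset A ->
  (val y \in gamma X (val x)) = (y \in gamma [set z : vert (induced A) | val z \in X] x).
Proof.
move=> /subsetP XA; rewrite !inE; case: (val x \in X) => //=.
apply/idP/idP => [/(homo_connect (f := insubd x))|/(homo_connect (f := val))]; last first.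
  by apply=> a b /=; rewrite !inE.
rewrite !valKd; apply=> a b /= /and3P[aX bX ab].
by rewrite !inE /adjacent /= !insubdK ?XA // aX bX.
Qed.

Lemma gamma_induced (G : digraph) (A X : {set vert G}) (x : vert (induced A)) :
  X \subset A -> gamma X (val x) = val @: gamma [set z : vert (induced A) | val z \in X] x.
Proof.
move=> XA; apply/setP => w; case: (induced_splitP A w) => y ->.
  by rewrite mem_imset; [exact: gamma_induced_val | exact: val_inj].
have yA : val y \notin A by have := valP y; rewrite inE.
apply/idP/imsetP => [/(subsetP (gamma_subset _ _))/(subsetP XA)| [z _ yz]].
  by rewrite (negbTE yA).
by move: yA; rewrite yz (valP z).
Qed.

Lemma Gamma_induced (G H K : digraph) (A : {set vert G}) (g : vert G -> vert H)
    (h : vert (induced A) -> vert K) (k : vert K -> vert H) (x : vert (induced A)) :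
  injective k -> (forall y, g (val y) = k (h y)) ->
  (forall v, g v = g (val x) -> v \in A) ->
  Gamma g (val x) = val @: Gamma h x.
Proof.
move=> k_inj gE fibre_in_A; rewrite /Gamma gamma_induced; last first.
  by apply/subsetP => v; rewrite inE => /eqP/fibre_in_A.
suff -> : [set y | val y \in [set v | g v == g (val x)]] = [set y | h y == h x] by [].
by apply/setP => y; rewrite !inE !gE (inj_eq k_inj).
Qed.

Definition is_left (T1 T2 : Type) (z : T1 + T2) : bool := if z is inl _ then true else false.

Definition left_part (G : digraph) (T1 T2 : Type) (g : vert G -> T1 + T2) : {set vert G} :=
  [set v | is_left (g v)].

(* The map that is f1 on A and f2 on ~A (the last branch is unreachable). *)
Definition glue (G : digraph) (A : {set vert G}) (T1 T2 : Type) (d : T1)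
    (f1 : vert (induced A) -> T1) (f2 : vert (induced (~: A)) -> T2) (v : vert G) : T1 + T2 :=
  if insub v is Some x then inl (f1 x)
  else if insub v is Some y then inr (f2 y) else inl d.

Section Glue.
Variables (G : digraph) (A : {set vert G}) (T1 T2 : Type) (d : T1).
Variables (f1 : vert (induced A) -> T1) (f2 : vert (induced (~: A)) -> T2).

Lemma glue_in (x : vert (induced A)) : glue d f1 f2 (val x) = inl (f1 x).
Proof. by rewrite /glue valK. Qed.

Lemma glue_out (y : vert (induced (~: A))) : glue d f1 f2 (val y) = inr (f2 y).
Proof. by rewrite /glue insubF ?valK //; have := valP y; rewrite inE => /negbTE. Qed.

Lemma left_part_glue : left_part (glue d f1 f2) = A.
Proof.
apply/setP => v; rewrite inE.
by case: (induced_splitP A v) => x ->; rewrite ?glue_in ?glue_out.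
Qed.

End Glue.

(* Restrictions of a map into a sum to a part A that it sends into one
   summand; r is a dummy value that is never used on such a part. *)
Section Restriction.
Variables (G : digraph) (A : {set vert G}) (H1 H2 : digraph).
Variable xi : vert G -> vert H1 + vert H2.

Definition restr_l (r : vert H1) (x : vert (induced A)) : vert H1 :=
  if xi (val x) is inl a then a else r.

Definition restr_r (r : vert H2) (x : vert (induced A)) : vert H2 :=
  if xi (val x) is inr a then a else r.

Lemma restr_lE r (x : vert (induced A)) :
  A \subset left_part xi -> xi (val x) = inl (restr_l r x).
Proof.
by move=> /subsetP/(_ _ (valP x)); rewrite inE /restr_l; case: (xi (val x)).
Qed.

Lemma restr_rE r (x : vert (induced A)) :
  A \subset ~: left_part xi -> xi (val x) = inr (restr_r r x).
Proof.
by move=> /subsetP/(_ _ (valP x)); rewrite !inE /restr_r; case: (xi (val x)).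
Qed.

Lemma restr_l_hom r :
  A \subset left_part xi -> is_hom G (ordsum H1 H2) xi -> is_hom (induced A) H1 (restr_l r).
Proof. by move=> Aleft xi_hom x y /xi_hom; rewrite /= !(restr_lE r _ Aleft). Qed.

Lemma restr_r_hom r :
  A \subset ~: left_part xi -> is_hom G (ordsum H1 H2) xi -> is_hom (induced A) H2 (restr_r r).
Proof. by move=> Aright xi_hom x y /xi_hom; rewrite /= !(restr_rE r _ Aright). Qed.

End Restriction.
Arguments restr_l {G} A {H1 H2} xi r x.
Arguments restr_r {G} A {H1 H2} xi r x.

Lemma Gamma_induced_left (G H1 H2 : digraph) (A : {set vert G})
    (g : vert G -> vert (ordsum H1 H2)) (h : vert (induced A) -> vert H1) (x : vert (induced A)) :
  left_part g = A -> (forall y, g (val y) = inl (h y)) -> Gamma g (val x) = val @: Gamma h x.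
Proof.
move=> gA gE; apply: (Gamma_induced _ gE) => [a b [] // | v gv].
by rewrite -gA inE gv gE.
Qed.

Lemma Gamma_induced_right (G H1 H2 : digraph) (A : {set vert G})
    (g : vert G -> vert (ordsum H1 H2)) (h : vert (induced A) -> vert H2) (x : vert (induced A)) :
  ~: left_part g = A -> (forall y, g (val y) = inr (h y)) -> Gamma g (val x) = val @: Gamma h x.
Proof.
move=> gA gE; apply: (Gamma_induced _ gE) => [a b [] // | v gv].
by rewrite -gA !inE gv gE.
Qed.

Definition Gamma_embedding (G R S : digraph) (rho : (vert G -> vert R) -> vert G -> vert S) :=
  [/\ forall xi, is_hom G R xi -> is_hom G S (rho xi),
      forall xi xi', is_hom G R xi -> is_hom G R xi' -> rho xi =1 rho xi' -> xi =1 xi'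
    & forall xi, is_hom G R xi -> forall v, Gamma (rho xi) v = Gamma xi v].

(* [=_Gamma provides the embeddings rho_G simultaneously for all finite posets
   G (a default value of S fills in the non-posets). *)
Lemma Gamma_embedding_family (R S : digraph) : vert S -> sqsubGamma R S ->
  exists rho : forall G : digraph, (vert G -> vert R) -> vert G -> vert S,
    forall G, is_poset G -> Gamma_embedding (rho G).
Proof.
move=> s RS.
have pick G : {rho : (vert G -> vert R) -> vert G -> vert S |
                is_poset G -> Gamma_embedding rho}.
  apply: constructive_indefinite_description.
  case: (classic (is_poset G)) => [/RS[rho rhoP] | not_poset]; first by exists rho.
  by exists (fun _ _ => s).
by exists (fun G => sval (pick G)) => G; apply: (svalP (pick G)).
Qed.

Section OrdinalSumEmbedding.
Variables (R1 R2 S1 S2 : digraph) (r1 : vert R1) (r2 : vert R2) (s1 : vert S1).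
Variable rho1 : forall G : digraph, (vert G -> vert R1) -> vert G -> vert S1.
Variable rho2 : forall G : digraph, (vert G -> vert R2) -> vert G -> vert S2.
Hypothesis rho1P : forall G, is_poset G -> Gamma_embedding (@rho1 G).
Hypothesis rho2P : forall G, is_poset G -> Gamma_embedding (@rho2 G).
Variables (G : digraph) (G_poset : is_poset G).

Definition ordsum_rho (xi : vert G -> vert (ordsum R1 R2)) : vert G -> vert (ordsum S1 S2) :=
  let A := left_part xi in
  glue s1 (rho1 (restr_l A xi r1)) (rho2 (restr_r (~: A) xi r2)).

Lemma ordsum_rhoE xi A : left_part xi = A ->
  ordsum_rho xi = glue s1 (rho1 (restr_l A xi r1)) (rho2 (restr_r (~: A) xi r2)).
Proof. by move <-. Qed.

Lemma left_part_ordsum_rho xi : left_part (ordsum_rho xi) = left_part xi.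
Proof. exact: left_part_glue. Qed.

Lemma rho1_embedding (A : {set vert G}) (v : vert G) :
  v \in A -> Gamma_embedding (@rho1 (induced A)).
Proof. by move=> vA; apply/rho1P/(induced_poset G_poset vA). Qed.

Lemma rho2_embedding (A : {set vert G}) (v : vert G) :
  v \in A -> Gamma_embedding (@rho2 (induced A)).
Proof. by move=> vA; apply/rho2P/(induced_poset G_poset vA). Qed.

(* An arc between A and ~A can only go upwards, both for xi and rho(xi). *)
Lemma ordsum_rho_hom xi :
  is_hom G (ordsum R1 R2) xi -> is_hom G (ordsum S1 S2) (ordsum_rho xi).
Proof.
move=> xi_hom v w; set A := left_part xi.
have Aleft : A \subset left_part xi := subxx _.
have Aright : ~: A \subset ~: left_part xi := subxx _.
case: (induced_splitP A v) => x ->; case: (induced_splitP A w) => y -> vw;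
  rewrite /ordsum_rho -/A ?glue_in ?glue_out //=.
- have [rho1_hom _ _] := rho1_embedding (valP x).
  exact: rho1_hom _ (restr_l_hom r1 Aleft xi_hom) x y vw.
- by have := xi_hom _ _ vw; rewrite (restr_rE r2 x Aright) (restr_lE r1 y Aleft).
- have [rho2_hom _ _] := rho2_embedding (valP x).
  exact: rho2_hom _ (restr_r_hom r2 Aright xi_hom) x y vw.
Qed.

(* Equal images have equal lower parts, then injectivity of rho1 and rho2. *)
Lemma ordsum_rho_inj xi xi' :
  is_hom G (ordsum R1 R2) xi -> is_hom G (ordsum R1 R2) xi' ->
  ordsum_rho xi =1 ordsum_rho xi' -> xi =1 xi'.
Proof.
move=> xi_hom xi'_hom eq_rho.
have [A xiA xi'A] : exists2 A, left_part xi = A & left_part xi' = A.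
  exists (left_part xi) => //; rewrite -!left_part_ordsum_rho.
  by apply/setP => v; rewrite !inE eq_rho.
move: eq_rho; rewrite (ordsum_rhoE xiA) (ordsum_rhoE xi'A) => eq_glue v.
case: (induced_splitP A v) => x ->.
- have Aleft (g : vert G -> vert (ordsum R1 R2)) : left_part g = A -> A \subset left_part g.
    by move->.
  have eq_rho1 : rho1 (restr_l A xi r1) =1 rho1 (restr_l A xi' r1).
    by move=> y; have := eq_glue (val y); rewrite !glue_in => -[].
  have [_ rho1_inj _] := rho1_embedding (valP x).
  have := rho1_inj _ _ (restr_l_hom r1 (Aleft _ xiA) xi_hom)
                        (restr_l_hom r1 (Aleft _ xi'A) xi'_hom) eq_rho1 x.
  by move=> eq_x; rewrite (restr_lE r1 x (Aleft _ xiA)) (restr_lE r1 x (Aleft _ xi'A)) eq_x.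
- have Aright (g : vert G -> vert (ordsum R1 R2)) : left_part g = A -> ~: A \subset ~: left_part g.
    by move->.
  have eq_rho2 : rho2 (restr_r (~: A) xi r2) =1 rho2 (restr_r (~: A) xi' r2).
    by move=> y; have := eq_glue (val y); rewrite !glue_out => -[].
  have [_ rho2_inj _] := rho2_embedding (valP x).
  have := rho2_inj _ _ (restr_r_hom r2 (Aright _ xiA) xi_hom)
                        (restr_r_hom r2 (Aright _ xi'A) xi'_hom) eq_rho2 x.
  by move=> eq_x; rewrite (restr_rE r2 x (Aright _ xiA)) (restr_rE r2 x (Aright _ xi'A)) eq_x.
Qed.

(* Components of fibres are computed in G[A] or G[~A], where rho1, rho2
   preserve them. *)
Lemma ordsum_rho_Gamma xi :
  is_hom G (ordsum R1 R2) xi -> forall v, Gamma (ordsum_rho xi) v = Gamma xi v.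
Proof.
move=> xi_hom v; set A := left_part xi.
have Aleft : A \subset left_part xi := subxx _.
have Aright : ~: A \subset ~: left_part xi := subxx _.
case: (induced_splitP A v) => x ->.
- have [_ _ rho1_Gamma] := rho1_embedding (valP x).
  rewrite (Gamma_induced_left x (left_part_ordsum_rho xi) (glue_in _ _ _)).
  rewrite (Gamma_induced_left x (erefl A) (restr_lE r1 ^~ Aleft)).
  by rewrite (rho1_Gamma _ (restr_l_hom r1 Aleft xi_hom)).
- have [_ _ rho2_Gamma] := rho2_embedding (valP x).
  rewrite (Gamma_induced_right x _ (glue_out _ _ _)) ?left_part_ordsum_rho //.
  rewrite (Gamma_induced_right x (erefl (~: A)) (restr_rE r2 ^~ Aright)).
  by rewrite (rho2_Gamma _ (restr_r_hom r2 Aright xi_hom)).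
Qed.

Lemma ordsum_rho_embedding : Gamma_embedding ordsum_rho.
Proof.
by split; [exact: ordsum_rho_hom | exact: ordsum_rho_inj | exact: ordsum_rho_Gamma].
Qed.

End OrdinalSumEmbedding.

Theorem corollary8 (R1 R2 S1 S2 : digraph) :
  is_poset R1 -> is_poset R2 -> is_poset S1 -> is_poset S2 ->
  sqsubGamma R1 S1 -> sqsubGamma R2 S2 ->
  sqsubGamma (ordsum R1 R2) (ordsum S1 S2).
Proof.
move=> [/card_gt0P[r1 _] _ _ _] [/card_gt0P[r2 _] _ _ _].
move=> [/card_gt0P[s1 _] _ _ _] [/card_gt0P[s2 _] _ _ _] R1S1 R2S2 G G_poset.
have [rho1 rho1P] := Gamma_embedding_family s1 R1S1.
have [rho2 rho2P] := Gamma_embedding_family s2 R2S2.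
by exists (@ordsum_rho _ _ _ _ r1 r2 s1 rho1 rho2 G); apply: ordsum_rho_embedding.
Qed.
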